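(* Let $n\ge 1$ and let $M$ be a finitely generated $A$-module. Then $M$ is $n$-strongly Gorenstein-projective if and only if $\Omega^nM\cong M$ in the stable category $A\text{-}\underline{\mathrm{mod}}$ and $\mathrm{Ext}^i_A(M,A)=0$ for $1\le i\le n$.
   Context: $A$ is an artin algebra; modules are finitely generated left $A$-modules. A complex $P^\bullet$ of finitely generated projective modules is totally acyclic if it is acyclic and $\mathrm{Hom}_A(P^\bullet,A)$ is acyclic. A totally acyclic complex is $n$-strong if it is $n$-periodic: $P^{i+n}=P^i$ and $d^{i+n}=d^i$ for all $i$. $M$ is $n$-strongly Gorenstein-projective if $M\cong Z^0(P^\bullet)$ for an $n$-strong totally acyclic complex $P^\bullet$. $A\text{-}\underline{\mathrm{mod}}$ is the stable category modulo morphisms factoring through projective modules; $\Omega M$ is the kernel of an epimorphism from a projective module onto $M$ (well defined in the stable category) and $\Omega^n$ its $n$-th iterate. *)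

From HB Require Import structures.
From mathcomp Require Import all_boot all_algebra.
Set Implicit Arguments. Unset Strict Implicit. Unset Printing Implicit Defensive.
Import GRing.Theory.
Local Open Scope ring_scope.

(* two-sided = left ideal of a commutative ring, as a Prop-valued predicate *)
Definition is_ideal (R : comPzRingType) (I : R -> Prop) : Prop :=
  I 0 /\ (forall x y, I x -> I y -> I (x - y)) /\ (forall r x, I x -> I (r * x)).

Definition artinian (R : comPzRingType) : Prop :=
  forall I : nat -> (R -> Prop),
    (forall k, is_ideal (I k)) ->
    (forall k x, I k.+1 x -> I k x) ->
    exists N, forall k, (N <= k)%N -> forall x, I k x <-> I N x.

Definition fin_gen (S : pzRingType) (M : lmodType S) : Prop :=
  exists s : seq M, forall m : M,
    exists c : 'I_(size s) -> S, m = \sum_(i < size s) c i *: s`_i.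

Definition artin_algebra (R : comPzRingType) (A : algType R) : Prop :=
  artinian R /\ fin_gen (A : lmodType R).

Section Modules.
Variable A : pzRingType.

Definition surj (U V : lmodType A) (f : {linear U -> V}) : Prop :=
  forall v, exists u, f u = v.

Definition projective (P : lmodType A) : Prop :=
  forall (N N' : lmodType A) (g : {linear N -> N'}) (f : {linear P -> N'}),
    surj g -> exists h : {linear P -> N}, forall x, g (h x) = f x.

Definition fg_projective (P : lmodType A) : Prop := fin_gen P /\ projective P.

Definition exact_at (U V W : lmodType A) (f : {linear U -> V}) (g : {linear V -> W})
  : Prop := forall v, g v = 0 <-> exists u, f u = v.

Definition mod_iso (M N : lmodType A) : Prop :=
  exists f : {linear M -> N}, bijective f.

(* a morphism factors through a (finitely generated) projective module,
   i.e. vanishes in the stable category A-mod *)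
Definition factors_through_proj (M N : lmodType A) (h : M -> N) : Prop :=
  exists (P : lmodType A) (u : {linear M -> P}) (v : {linear P -> N}),
    fg_projective P /\ forall x, h x = v (u x).

Definition stably_iso (M N : lmodType A) : Prop :=
  exists (f : {linear M -> N}) (g : {linear N -> M}),
    factors_through_proj (fun x => g (f x) - x) /\
    factors_through_proj (fun y => f (g y) - y).

(* K is (a choice of) Omega M: the kernel of an epimorphism from a f.g.
   projective module onto M *)
Definition syzygy (M K : lmodType A) : Prop :=
  exists (P : lmodType A) (i : {linear K -> P}) (p : {linear P -> M}),
    fg_projective P /\ injective i /\ surj p /\ exact_at i p.

Fixpoint nsyzygy (n : nat) (M K : lmodType A) : Prop :=
  match n with
  | 0 => mod_iso M K
  | k.+1 => exists N : lmodType A, nsyzygy k M N /\ syzygy N K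
  end.

(* projective resolution of M by f.g. projective modules
   ... -> P (k+1) -d k-> P k -> ... -> P 0 -eps-> M -> 0 *)
Record proj_resolution (M : lmodType A) := ProjRes {
  pr_P : nat -> lmodType A;
  pr_d : forall k, {linear pr_P k.+1 -> pr_P k};
  pr_eps : {linear pr_P 0 -> M};
  pr_proj : forall k, fg_projective (pr_P k);
  pr_surj : surj pr_eps;
  pr_exact0 : exact_at (pr_d 0) pr_eps;
  pr_exact : forall k, exact_at (pr_d k.+1) (pr_d k)
}.

(* Ext^i_A(M, A) = 0, with A the regular left module A^o; for i >= 1 it is
   computed as the i-th cohomology of Hom_A(P_*, A) for a projective
   resolution P_* of M *)
Definition Ext_regular_vanishes (M : lmodType A) (i : nat) : Prop :=
  match i with
  | 0 => forall f : {linear M -> A^o}, forall x, f x = 0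
  | k.+1 => exists R : proj_resolution M,
      forall f : {linear pr_P R k.+1 -> A^o},
        (forall y, f (pr_d R k.+1 y) = 0) ->
        exists g : {linear pr_P R k -> A^o}, forall x, f x = g (pr_d R k x)
  end.

(* An n-periodic Z-indexed complex
   P^i with P^{i+n} = P^i, d^{i+n} = d^i is the same as a family indexed by
   Z/n = 'I_n with differentials d^i : P^i -> P^{i+1 mod n}. *)
Definition n_strongly_GP (n : nat) (M : lmodType A) : Prop :=
  match n with
  | 0 => False
  | k.+1 =>
    exists (P : 'I_k.+1 -> lmodType A)
           (d : forall i : 'I_k.+1, {linear P i -> P (ordS i)}),
      (forall i, fg_projective (P i)) /\
      (forall i : 'I_k.+1, exact_at (d i) (d (ordS i))) /\
      (* Hom_A(P, A) acyclic: exact at Hom_A(P^{i+1}, A) *)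
      (forall i : 'I_k.+1, forall f : {linear P (ordS i) -> A^o},
          (forall x, f (d i x) = 0) ->
          exists g : {linear P (ordS (ordS i)) -> A^o},
            forall y, f y = g (d (ordS i) y)) /\
      (* M ≅ Z^0(P) = ker d^0 *)
      (exists iota : {linear M -> P ord0},
          injective iota /\
          forall y, d ord0 y = 0 <-> exists m, iota m = y)
  end.

End Modules.

(* Forward direction: the cycles Z^t = ker d^t of the periodic complex form short exact
   sequences 0 -> Z^t -> P^t -> Z^(t+1) -> 0, so n steps backwards around the period show
   that Z^0 ~ M is its own n-th syzygy; the complex read backwards from P^(-1) is a
   projective resolution of M on which Hom(-, A) stays exact, so Ext^i(M, A) = 0, i >= 1.

   Backward direction: for a resolution with syzygies N_j, Ext^(j+1)(M, A) = 0 says that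
   maps N_(j+1) -> A extend along N_(j+1) -> P_j, a property that only depends on the
   stable class of N_(j+1).  A stable isomorphism N_n ~ M makes M the kernel of an
   idempotent of N_n (+) P (P projective) that factors through a projective; extending
   it along N_n (+) P -> P_(n-1) (+) P turns 0 -> N_n -> P_(n-1) -> N_(n-1) -> 0 into
   0 -> M -> X -> N_(n-1) -> 0 with X projective.  Splicing this sequence with
   P_(n-2), ..., P_0 -> M closes up into an n-periodic totally acyclic complex. *)

From HB Require Import structures.
From mathcomp Require Import all_boot all_algebra.
From Stdlib Require Import ClassicalEpsilon.
Set Implicit Arguments. Unset Strict Implicit. Unset Printing Implicit Defensive.
Import GRing.Theory.
Local Open Scope ring_scope.

Section LinearMaps.
Variable A : pzRingType.
Implicit Types U V W : lmodType A.

Section Build.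
Variables (U V : lmodType A) (f : U -> V) (fL : linear f).
Definition linear_of := f.
HB.instance Definition _ := GRing.isLinear.Build A U V *:%R linear_of fL.
Definition mklinear : {linear U -> V} := linear_of.
End Build.

Section Kernel.
Variables (U V : lmodType A) (f : {linear U -> V}).

Definition ker_pred := [pred x : U | f x == 0].

Fact ker_submod_closed : submod_closed ker_pred.
Proof.
split; first by rewrite inE linear0.
by move=> a x y; rewrite !inE linearP => /eqP-> /eqP->; rewrite scaler0 addr0.
Qed.
HB.instance Definition _ := GRing.isSubmodClosed.Build A U ker_pred ker_submod_closed.

Record kernel := Kernel { ker_val : U; ker_valP : ker_val \in ker_pred }.
HB.instance Definition _ := [isSub for ker_val].
HB.instance Definition _ := [Choice of kernel by <:].
HB.instance Definition _ := [SubChoice_isSubLmodule of kernel by <:].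

Definition ker_incl : {linear kernel -> U} := @mklinear _ _ ker_val (fun _ _ _ => erefl).

Lemma ker_incl_inj : injective ker_incl.
Proof. exact: val_inj. Qed.

Lemma ker_incl0 x : f (ker_incl x) = 0.
Proof. by apply/eqP; case: x. Qed.

Lemma ker_inclP y : f y = 0 -> exists x, ker_incl x = y.
Proof. by move=> /eqP fy0; exists (Kernel fy0). Qed.

Section Corestriction.
Variables (W : lmodType A) (g : {linear W -> U}) (fg0 : forall x, f (g x) = 0).

Fact ker_corestr_linear : linear (fun x => Kernel (introT eqP (fg0 x))).
Proof. by move=> a x y; apply: val_inj; rewrite /= linearP. Qed.
Definition ker_corestr : {linear W -> kernel} := mklinear ker_corestr_linear.

Lemma ker_corestrE x : ker_incl (ker_corestr x) = g x.
Proof. by []. Qed.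
End Corestriction.
End Kernel.

Fact lpair_linear U V W (f : {linear W -> U}) (g : {linear W -> V}) :
  linear (fun x => (f x, g x)).
Proof. by move=> a x y; rewrite !linearP. Qed.
Definition lpair U V W (f : {linear W -> U}) (g : {linear W -> V}) :
  {linear W -> (U * V)%type} := mklinear (lpair_linear f g).

Lemma lpairE U V W (f : {linear W -> U}) (g : {linear W -> V}) x :
  lpair f g x = (f x, g x).
Proof. by []. Qed.

Lemma linear_factor_inj U V W (i : {linear U -> V}) (f : {linear W -> V}) :
  injective i -> (forall w, exists u, i u = f w) ->
  exists t : {linear W -> U}, forall w, i (t w) = f w.
Proof.
move=> i_inj /(_ _)/constructive_indefinite_description t.
have tE w : i (sval (t w)) = f w := svalP (t w).
have tL : linear (fun w => sval (t w)).
  by move=> a x y; apply: i_inj; rewrite [RHS]linearP !tE linearP.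
by exists (mklinear tL).
Qed.

Lemma linear_factor_surj U V W (q : {linear U -> V}) (f : {linear U -> W}) :
  surj q -> (forall x, q x = 0 -> f x = 0) ->
  exists h : {linear V -> W}, forall x, f x = h (q x).
Proof.
move=> /(_ _)/constructive_indefinite_description s qf0.
have fq x y : q x = q y -> f x = f y.
  by move=> qxy; apply/eqP; rewrite -subr_eq0 -linearB qf0 // linearB qxy subrr.
have sE v : q (sval (s v)) = v := svalP (s v).
have hL : linear (fun v => f (sval (s v))).
  by move=> a x y; rewrite -linearP; apply: fq; rewrite [RHS]linearP !sE.
by exists (mklinear hL) => x; apply: fq; rewrite /= sE.
Qed.

Lemma linear_inverse U V (f : {linear U -> V}) : bijective f ->
  exists g : {linear V -> U}, cancel f g /\ cancel g f.
Proof.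
case=> g fK gK.
have gL : linear g by move=> a x y; apply: (can_inj fK); rewrite linearP !gK.
by exists (mklinear gL).
Qed.

Lemma inj_surj_bijective U V (f : {linear U -> V}) :
  injective f -> surj f -> bijective f.
Proof.
move=> f_inj f_surj; have [g fgK] := linear_factor_inj (f := idfun) f_inj f_surj.
by exists g => // x; apply: f_inj.
Qed.

End LinearMaps.

Section FiniteProjective.
Variable A : pzRingType.
Implicit Types U V P X : lmodType A.

Lemma fin_gen_rowP U :
  fin_gen U <-> exists m (s : {linear 'rV[A]_m -> U}), surj s.
Proof.
split=> [[s sP] | [m [s s_surj]]].
  have sL : linear (fun c : 'rV[A]_(size s) => \sum_(i < size s) c 0 i *: s`_i).
    move=> a x y; rewrite scaler_sumr -big_split; apply: eq_bigr => i _.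
    by rewrite !mxE scalerDl scalerA.
  exists (size s), (mklinear sL) => u; have [c ->] := sP u.
  by exists (\row_i c i); apply: eq_bigr => i _; rewrite mxE.
exists [seq s (delta_mx 0 i) | i <- enum 'I_m] => u.
rewrite size_map size_enum_ord; have [c <-] := s_surj u; exists (c 0).
rewrite {1}(row_sum_delta c) linear_sum; apply: eq_bigr => i _.
by rewrite linearZ (nth_map i) ?size_enum_ord // nth_ord_enum.
Qed.

Lemma fin_gen_surj U V (f : {linear U -> V}) : fin_gen U -> surj f -> fin_gen V.
Proof.
move=> /fin_gen_rowP [m [s s_surj]] f_surj; apply/fin_gen_rowP.
exists m, (f \o s) => v; have [u <-] := f_surj v; have [c <-] := s_surj u.
by exists c.
Qed.

Lemma fin_gen_pair U V : fin_gen U -> fin_gen V -> fin_gen (U * V)%type.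
Proof.
move=> /fin_gen_rowP [m1 [s1 s1_surj]] /fin_gen_rowP [m2 [s2 s2_surj]].
apply/fin_gen_rowP; exists (m1 + m2)%N.
exists (lpair (s1 \o @lsubmx A 1 m1 m2) (s2 \o @rsubmx A 1 m1 m2)) => -[u v].
have [c1 <-] := s1_surj u; have [c2 <-] := s2_surj v.
by exists (row_mx c1 c2); rewrite lpairE /= row_mxKl row_mxKr.
Qed.

Lemma projective_retract P X (r : {linear P -> X}) (s : {linear X -> P}) :
  projective P -> cancel s r -> projective X.
Proof.
move=> P_proj sK N N' g f g_surj; have [h hP] := P_proj N N' g (f \o r) g_surj.
by exists (h \o s) => x; rewrite /= hP /= sK.
Qed.

Lemma projective_pair U V : projective U -> projective V -> projective (U * V)%type.
Proof.
move=> U_proj V_proj N N' g f g_surj.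
have [h1 h1P] := U_proj N N' g (f \o lpair idfun \0) g_surj.
have [h2 h2P] := V_proj N N' g (f \o lpair \0 idfun) g_surj.
exists ((h1 \o fst) \+ (h2 \o snd)) => -[u v].
rewrite /= linearD h1P h2P /= -linearD /linear_of /=; congr (f _).
by apply: injective_projections; rewrite /= ?addr0 ?add0r.
Qed.

Lemma fg_projective_retract P X (r : {linear P -> X}) (s : {linear X -> P}) :
  fg_projective P -> cancel s r -> fg_projective X.
Proof.
move=> [P_fg P_proj] sK; split; last exact: projective_retract sK.
by apply: fin_gen_surj P_fg _ => x; exists (s x).
Qed.

Lemma fg_projective_pair U V :
  fg_projective U -> fg_projective V -> fg_projective (U * V)%type.
Proof.
by move=> [U_fg U_proj] [V_fg V_proj]; split; [apply: fin_gen_pair | apply: projective_pair].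
Qed.

Lemma fg_projective_row0 : fg_projective 'rV[A]_0.
Proof.
split; first by exists [::] => u; exists (fun _ => 0); rewrite big_ord0 [u]thinmx0.
by move=> N N' g f _; exists \0 => x; rewrite /= linear0 [x]thinmx0 linear0.
Qed.

End FiniteProjective.

Section StableCategory.
Variable A : pzRingType.
Implicit Types M N L : lmodType A.

Lemma factors_through_proj0 M N : factors_through_proj (fun _ : M => 0 : N).
Proof. by exists 'rV[A]_0, \0, \0; split=> //; exact: fg_projective_row0. Qed.

Lemma factors_through_projD M N (h1 h2 : M -> N) :
  factors_through_proj h1 -> factors_through_proj h2 ->
  factors_through_proj (fun x => h1 x + h2 x).
Proof.
move=> [P1 [u1 [v1 [P1_fgp h1E]]]] [P2 [u2 [v2 [P2_fgp h2E]]]].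
exists (P1 * P2)%type, (lpair u1 u2), ((v1 \o fst) \+ (v2 \o snd)).
by split; [exact: fg_projective_pair | move=> x; rewrite h1E h2E].
Qed.

Lemma factors_through_projN M N (h : M -> N) :
  factors_through_proj h -> factors_through_proj (fun x => - h x).
Proof.
move=> [P [u [v [P_fgp hE]]]]; exists P, u, (\- v).
by split=> // x; rewrite hE.
Qed.

Lemma factors_through_proj_comp M N M' N' (h : M -> N)
    (c : {linear N -> N'}) (d : {linear M' -> M}) :
  factors_through_proj h -> factors_through_proj (fun x => c (h (d x))).
Proof.
move=> [P [u [v [P_fgp hE]]]]; exists P, (u \o d), (c \o v).
by split=> // x; rewrite hE.
Qed.

Lemma eq_factors_through_proj M N (h1 h2 : M -> N) :
  h1 =1 h2 -> factors_through_proj h1 -> factors_through_proj h2.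
Proof. by move=> h12 [P [u [v [P_fgp hE]]]]; exists P, u, v; split=> // x; rewrite -h12. Qed.

Lemma stably_iso_sym M N : stably_iso M N -> stably_iso N M.
Proof. by move=> [f [g [gf fg]]]; exists g, f. Qed.

Lemma stably_iso_trans M N L : stably_iso M N -> stably_iso N L -> stably_iso M L.
Proof.
move=> [f1 [g1 [gf1 fg1]]] [f2 [g2 [gf2 fg2]]].
exists (f2 \o f1), (g1 \o g2); split.
  apply: (@eq_factors_through_proj _ _
    (fun x => g1 (g2 (f2 (f1 x)) - f1 x) + (g1 (f1 x) - x))).
    by move=> x; rewrite /= linearB addrA subrK.
  by apply: factors_through_projD => //; exact: (factors_through_proj_comp g1 f1 gf2).
apply: (@eq_factors_through_proj _ _
  (fun x => f2 (f1 (g1 (g2 x)) - g2 x) + (f2 (g2 x) - x))).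
  by move=> x; rewrite /= linearB addrA subrK.
by apply: factors_through_projD => //; exact: (factors_through_proj_comp f2 g2 fg1).
Qed.

Lemma mod_iso_stably_iso M N : mod_iso M N -> stably_iso M N.
Proof.
move=> [f /linear_inverse [g [fK gK]]]; exists f, g.
by split; apply: (eq_factors_through_proj _ (factors_through_proj0 _ _)) => x;
  rewrite ?fK ?gK subrr.
Qed.

End StableCategory.

Section SyzygySequences.
Variable A : pzRingType.
Implicit Types K Q N T : lmodType A.

Definition syz_seq K Q N (i : {linear K -> Q}) (p : {linear Q -> N}) :=
  fg_projective Q /\ injective i /\ surj p /\ exact_at i p.

Definition extends_along K Q (i : {linear K -> Q}) T :=
  forall h : {linear K -> T}, exists g : {linear Q -> T}, forall x, h x = g (i x).

Section Comparison.
Variables (K Q N : lmodType A) (i : {linear K -> Q}) (p : {linear Q -> N}).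
Variables (K' Q' N' : lmodType A) (i' : {linear K' -> Q'}) (p' : {linear Q' -> N'}).
Hypotheses (S : syz_seq i p) (S' : syz_seq i' p').

Lemma syz_seq_comp0 k : p (i k) = 0.
Proof. by case: S => _ [_ [_ ip]]; apply/ip; exists k. Qed.

Lemma syz_seq_lift (a : {linear N -> N'}) :
  exists (phi : {linear Q -> Q'}) (a' : {linear K -> K'}),
    (forall q, p' (phi q) = a (p q)) /\ (forall k, i' (a' k) = phi (i k)).
Proof.
have [[_ Q_proj] _] := S; have [_ [i'_inj [p'_surj i'p']]] := S'.
have [phi phiP] := Q_proj _ _ p' (a \o p) p'_surj.
have [a' a'P] : exists a' : {linear K -> K'}, forall k, i' (a' k) = (phi \o i) k.
  apply: linear_factor_inj => // k; apply/i'p'.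
  by rewrite /= phiP /= syz_seq_comp0 linear0.
by exists phi, a'.
Qed.

(* [psi \o phi - 1] covers [b \o a - 1]; subtracting a lift of the latter through the
   projective [Q] leaves a map with values in [i K]. *)
Lemma syz_seq_homotopy (a : {linear N -> N'}) (b : {linear N' -> N})
    (phi : {linear Q -> Q'}) (a' : {linear K -> K'})
    (psi : {linear Q' -> Q}) (b' : {linear K' -> K}) :
    (forall q, p' (phi q) = a (p q)) -> (forall k, i' (a' k) = phi (i k)) ->
    (forall q, p (psi q) = b (p' q)) -> (forall k, i (b' k) = psi (i' k)) ->
    factors_through_proj (fun x => b (a x) - x) ->
  exists t : {linear Q -> K}, forall k, b' (a' k) - k = t (i k).
Proof.
move=> phiP a'P psiP b'P [T [u [v [[_ T_proj] baE]]]].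
have [_ [i_inj [p_surj ip]]] := S.
have [w wP] := T_proj _ _ p v p_surj.
pose chi := ((psi \o phi) \- idfun) \- (w \o u \o p).
have [t tP] : exists t : {linear Q -> K}, forall q, i (t q) = chi q.
  apply: linear_factor_inj => // q; apply/ip.
  by rewrite /= !linearB wP psiP phiP -baE !subrr.
exists t => k; apply: i_inj; rewrite tP linearB b'P a'P /chi /=.
by rewrite syz_seq_comp0 !linear0 addr0.
Qed.

End Comparison.

Lemma syz_seq_stably_iso K Q N (i : {linear K -> Q}) (p : {linear Q -> N})
    K' Q' N' (i' : {linear K' -> Q'}) (p' : {linear Q' -> N'}) :
  syz_seq i p -> syz_seq i' p' -> stably_iso N N' -> stably_iso K K'.
Proof.
move=> S S' [f [g [gf fg]]].
have [phi [a' [phiP a'P]]] := syz_seq_lift S S' f.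
have [psi [b' [psiP b'P]]] := syz_seq_lift S' S g.
have [t tP] := syz_seq_homotopy S phiP a'P psiP b'P gf.
have [t' t'P] := syz_seq_homotopy S' psiP b'P phiP a'P fg.
exists a', b'; split; [exists Q, i, t | exists Q', i', t'].
  by split=> //; case: S.
by split=> //; case: S'.
Qed.

Lemma syz_seq_precomp K K' Q N (i : {linear K -> Q}) (p : {linear Q -> N})
    (c : {linear K' -> K}) :
  syz_seq i p -> bijective c -> syz_seq (i \o c) p.
Proof.
move=> [Q_fgp [i_inj [p_surj ip]]] [c' cK c'K]; split=> //; split.
  by move=> x y /= /i_inj /(can_inj cK).
split=> // v; rewrite (ip v); split=> -[u <-]; last by exists (c u).
by exists (c' u); rewrite /= c'K.
Qed.

Lemma syz_seq_postcomp K Q N N' (i : {linear K -> Q}) (p : {linear Q -> N})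
    (c : {linear N -> N'}) :
  syz_seq i p -> bijective c -> syz_seq i (c \o p).
Proof.
move=> [Q_fgp [i_inj [p_surj ip]]] [c' cK c'K]; split=> //; split=> //; split.
  by move=> y; have [u pu] := p_surj (c' y); exists u; rewrite /= pu c'K.
move=> v; rewrite /= -(ip v); split=> [cpv0 | ->]; last exact: linear0.
by rewrite -(cK (p v)) cpv0 -(linear0 c) cK.
Qed.

Lemma extends_along_precomp K K' Q (i : {linear K -> Q}) (c : {linear K' -> K}) T :
  extends_along i T -> bijective c -> extends_along (i \o c) T.
Proof.
move=> i_ext /linear_inverse [c' [cK c'K]] h.
have [g gP] := i_ext (h \o c'); exists g => x.
by rewrite /= -gP /= cK.
Qed.

Lemma extends_along_transfer K Q N (i : {linear K -> Q}) (p : {linear Q -> N})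
    K' Q' N' (i' : {linear K' -> Q'}) (p' : {linear Q' -> N'})
    (a : {linear N -> N'}) (b : {linear N' -> N}) T :
  syz_seq i p -> syz_seq i' p' -> factors_through_proj (fun x => b (a x) - x) ->
  extends_along i' T -> extends_along i T.
Proof.
move=> S S' ba i'_ext h.
have [phi [a' [phiP a'P]]] := syz_seq_lift S S' a.
have [psi [b' [psiP b'P]]] := syz_seq_lift S' S b.
have [t tP] := syz_seq_homotopy S phiP a'P psiP b'P ba.
have [g gP] := i'_ext (h \o b').
exists ((g \o phi) \- (h \o t)) => k.
by rewrite /= -a'P -gP /= -tP linearB opprB addrC subrK.
Qed.

Fact row_coord_linear m (l : 'I_m) : linear (fun v : 'rV[A]_m => v 0 l : A^o).
Proof. by move=> a x y; rewrite !mxE. Qed.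

Lemma extends_along_fg_projective K Q (i : {linear K -> Q}) T :
  extends_along i A^o -> fg_projective T -> extends_along i T.
Proof.
move=> i_ext [/fin_gen_rowP [m [s s_surj]] T_proj] h.
have [tau tauP] := T_proj _ _ s idfun s_surj.
have coord_ext l : exists g : {linear Q -> A^o},
    forall x, mklinear (row_coord_linear l) (tau (h x)) = g (i x).
  exact: (i_ext (mklinear (row_coord_linear l) \o tau \o h)).
have [G GP] := choice _ coord_ext.
have gL : linear (fun q => \row_l G l q : 'rV[A]_m).
  by move=> a x y; apply/rowP => l; rewrite !mxE linearP.
exists (s \o mklinear gL) => x; rewrite -[h x]tauP /=; congr (s _).
by apply/rowP => l; rewrite mxE -GP.
Qed.

End SyzygySequences.

Section Resolution.
Variables (A : pzRingType) (M : lmodType A) (R : proj_resolution M).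

Definition res_codom (j : nat) : lmodType A :=
  match j with 0 => M | j.+1 => pr_P R j end.

Definition res_out (j : nat) : {linear pr_P R j -> res_codom j} :=
  match j return {linear pr_P R j -> res_codom j} with
  | 0 => pr_eps R
  | j.+1 => pr_d R j
  end.

Lemma res_out_exact j : exact_at (pr_d R j) (res_out j).
Proof. by case: j => [|j]; [exact: pr_exact0 | exact: pr_exact]. Qed.

Lemma res_out_d j x : res_out j (pr_d R j x) = 0.
Proof. by apply/res_out_exact; exists x. Qed.

Definition res_syz (j : nat) : lmodType A :=
  match j with 0 => M | j.+1 => kernel (res_out j) end.

Definition res_syz_incl j : {linear res_syz j.+1 -> pr_P R j} := ker_incl (res_out j).

Definition res_syz_proj j : {linear pr_P R j -> res_syz j} :=
  match j return {linear pr_P R j -> res_syz j} with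
  | 0 => pr_eps R
  | j.+1 => ker_corestr (@res_out_d j)
  end.

Lemma res_syz_proj_eq0 j v : res_syz_proj j v = 0 <-> res_out j v = 0.
Proof.
case: j v => [|j] v //=; split=> [/(congr1 (@ker_incl _ _ _ _)) | dv0].
  by rewrite ker_corestrE linear0.
by apply: ker_incl_inj; rewrite ker_corestrE dv0 linear0.
Qed.

Lemma res_syz_seq j : syz_seq (res_syz_incl j) (res_syz_proj j).
Proof.
split; first exact: pr_proj.
split; first exact: ker_incl_inj.
split.
  case: j => [|j]; first exact: pr_surj.
  move=> z; have [u uz] := proj1 (res_out_exact (ker_incl _ z)) (ker_incl0 z).
  by exists u; apply: ker_incl_inj; rewrite ker_corestrE.
move=> v; rewrite res_syz_proj_eq0; split=> [/ker_inclP // | [u <-]].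
exact: ker_incl0.
Qed.

Definition res_Ext_vanishes k :=
  forall f : {linear pr_P R k.+1 -> A^o}, (forall y, f (pr_d R k.+1 y) = 0) ->
  exists g : {linear pr_P R k -> A^o}, forall x, f x = g (pr_d R k x).

Lemma res_Ext_extends k : res_Ext_vanishes k -> extends_along (res_syz_incl k) A^o.
Proof.
move=> Ek h; have [_ [_ [p_surj _]]] := res_syz_seq k.+1.
have [y|g gP] := Ek (h \o res_syz_proj k.+1).
  by rewrite /= (proj2 (res_syz_proj_eq0 _) (res_out_d _)) linear0.
by exists g => z; have [x <-] := p_surj z; exact: gP.
Qed.

Lemma nsyzygy_stably_iso_res_syz n K : nsyzygy n M K -> stably_iso K (res_syz n).
Proof.
elim: n K => [|n IHn] K /=; first by move=> /mod_iso_stably_iso /stably_iso_sym.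
move=> [N [MN [P [i [p S]]]]].
exact: (syz_seq_stably_iso S (res_syz_seq n) (IHn _ MN)).
Qed.

End Resolution.

Lemma res_syz_stably_iso (A : pzRingType) (M : lmodType A) (R R' : proj_resolution M) j :
  stably_iso (res_syz R j) (res_syz R' j).
Proof.
elim: j => [|j IHj]; first by apply: mod_iso_stably_iso; exists idfun; exists id.
exact: (syz_seq_stably_iso (res_syz_seq R j) (res_syz_seq R' j) IHj).
Qed.

Section Replacement.
Variable A : pzRingType.
Implicit Types K Q N M T P X : lmodType A.

Lemma stably_iso_retract K M : stably_iso K M ->
  exists P (al : {linear M -> (K * P)%type}) (be : {linear (K * P)%type -> M}),
    [/\ fg_projective P, cancel al be & factors_through_proj (fun c => c - al (be c))].
Proof.
move=> [f [g [gf [P [u [v [P_fgp fgE]]]]]]].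
exists P, (lpair g u), ((f \o fst) \- (v \o snd)); split=> //.
  by move=> m; rewrite /= -fgE opprB addrC subrK.
apply: (@eq_factors_through_proj _ _ _ (fun c =>
  lpair idfun \0 (- (g (f c.1) - c.1)) +
  (lpair g u (v c.2) + lpair \0 idfun (c.2 - u (f c.1))))).
  move=> [k y]; apply: injective_projections => /=.
    by rewrite (linearB g) addr0 !opprB addrAC addrA.
  by rewrite (linearB u) add0r opprB addrCA.
apply: factors_through_projD.
  exact: (factors_through_proj_comp (lpair idfun \0) fst (factors_through_projN gf)).
apply: factors_through_projD; first by exists P, snd, (lpair g u \o v).
by exists P, (snd \- (u \o f \o fst)), (lpair \0 idfun).
Qed.

Section DirectSum.
Variables (K Q N P : lmodType A) (i : {linear K -> Q}) (p : {linear Q -> N}).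

Definition incl_sum : {linear (K * P)%type -> (Q * P)%type} := lpair (i \o fst) snd.

Lemma syz_seq_sum : syz_seq i p -> fg_projective P -> syz_seq incl_sum (p \o fst).
Proof.
move=> [Q_fgp [i_inj [p_surj ip]]] P_fgp; split; first exact: fg_projective_pair.
split.
  by move=> [k1 y1] [k2 y2] [/i_inj -> ->].
split; first by move=> n; have [q <-] := p_surj n; exists (q, 0).
move=> [q y]; split=> [/= /ip [k <-] | [[k y'] <-] /=]; first by exists (k, y).
by apply/ip; exists k.
Qed.

Lemma extends_along_sum T : extends_along i T -> extends_along incl_sum T.
Proof.
move=> i_ext h; have [g gP] := i_ext (h \o lpair idfun \0).
exists ((g \o fst) \+ (h \o lpair \0 snd)) => -[k y].
rewrite /= -gP /= -linearD /linear_of /=; congr (h _).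
by apply: injective_projections; rewrite /= ?addr0 ?add0r.
Qed.

End DirectSum.

Lemma idempotent_retraction K Q (i : {linear K -> Q}) (e : {linear K -> K}) :
  (forall k, e (e k) = e k) -> factors_through_proj e ->
  (forall T, fg_projective T -> extends_along i T) ->
  exists r : {linear Q -> K}, (forall k, r (i k) = e k) /\ (forall q, e (r q) = r q).
Proof.
move=> eeE [T [u [v [T_fgp eE]]]] i_ext.
have [u' u'P] := i_ext T T_fgp u.
by exists (e \o v \o u'); split=> [k | q]; rewrite /= -?u'P -?eE eeE.
Qed.

Lemma syz_seq_ker K Q N (i : {linear K -> Q}) (p : {linear Q -> N})
    (e : {linear K -> K}) (r : {linear Q -> K}) :
  syz_seq i p -> (forall k, r (i k) = e k) -> (forall q, e (r q) = r q) ->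
  exists j : {linear kernel e -> kernel r}, syz_seq j (p \o ker_incl r).
Proof.
move=> [Q_fgp [i_inj [p_surj ip]]] riE erE.
have jP x : r ((i \o ker_incl e) x) = 0 by rewrite /= riE ker_incl0.
have rhoP q : r ((idfun \- (i \o r)) q) = 0 by rewrite /= linearB riE erE subrr.
pose rho := ker_corestr rhoP.
have rhoK : cancel (ker_incl r) rho.
  by move=> x; apply: ker_incl_inj; rewrite ker_corestrE /= ker_incl0 linear0 subr0.
exists (ker_corestr jP); split; first exact: fg_projective_retract rhoK.
split.
  by move=> x y /(congr1 (ker_incl r)); rewrite !ker_corestrE => /i_inj /ker_incl_inj.
split.
  move=> n; have [q <-] := p_surj n; exists (rho q).
  change (p (ker_incl r (rho q)) = p q).
  by rewrite ker_corestrE /= linearB (proj2 (ip (i (r q)))) ?subr0 //; exists (r q).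
move=> x; split=> [/ip [k ikx] | [k <-]]; last by apply/ip; exists (ker_incl e k).
have ek0 : e k = 0 by rewrite -riE ikx ker_incl0.
by exists (Kernel (introT eqP ek0)); apply: ker_incl_inj; rewrite ker_corestrE.
Qed.

Lemma mod_iso_ker_idempotent M K (al : {linear M -> K}) (be : {linear K -> M}) :
  cancel al be -> mod_iso M (kernel (idfun \- (al \o be))).
Proof.
move=> alK; have alP m : (idfun \- (al \o be)) (al m) = 0 by rewrite /= alK subrr.
exists (ker_corestr alP); apply: inj_surj_bijective.
  by move=> m1 m2 /(congr1 (be \o ker_incl _)); rewrite /= !alK.
move=> x; exists (be (ker_incl _ x)); apply: ker_incl_inj; rewrite ker_corestrE.
by apply/eqP; rewrite eq_sym -subr_eq0; apply/eqP; exact: (ker_incl0 x).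
Qed.

Lemma syz_seq_replace K Q N (i : {linear K -> Q}) (p : {linear Q -> N}) M :
  syz_seq i p -> stably_iso K M -> (forall T, fg_projective T -> extends_along i T) ->
  exists X (j : {linear M -> X}) (p' : {linear X -> N}), syz_seq j p'.
Proof.
move=> S KM i_ext.
have [P [al [be [P_fgp alK eF]]]] := stably_iso_retract KM.
pose e := idfun \- (al \o be).
have eeE c : e (e c) = e c by rewrite /e /= (linearB be) alK subrr linear0 subr0.
have [r [riE erE]] := idempotent_retraction eeE
  (eq_factors_through_proj (fun _ => erefl) eF)
  (fun T T_fgp => extends_along_sum (P := P) (i_ext T T_fgp)).
have [j Sj] := syz_seq_ker (syz_seq_sum S P_fgp) riE erE.
have [c c_bij] := mod_iso_ker_idempotent alK.
by exists (kernel r), (j \o c), (p \o fst \o ker_incl r); exact: syz_seq_precomp.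
Qed.

End Replacement.

Section Splicing.
Variable A : pzRingType.
Variables (U V W Z1 Z2 : lmodType A) (q1 : {linear U -> Z1}) (i1 : {linear Z1 -> V}).
Variables (q2 : {linear V -> Z2}) (i2 : {linear Z2 -> W}).
Hypotheses (q1_surj : surj q1) (i1q2 : exact_at i1 q2).

Lemma splice_exact : injective i2 -> exact_at (i1 \o q1) (i2 \o q2).
Proof.
move=> i2_inj v; rewrite /= -(linear0 i2); split=> [/i2_inj /i1q2 [z <-] | [u <-]].
  by have [u <-] := q1_surj z; exists u.
by congr (i2 _); apply/i1q2; exists (q1 u).
Qed.

Lemma splice_hom_exact : surj q2 -> extends_along i2 A^o ->
  forall f : {linear V -> A^o}, (forall u, f (i1 (q1 u)) = 0) ->
  exists g : {linear W -> A^o}, forall v, f v = g (i2 (q2 v)).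
Proof.
move=> q2_surj i2_ext f fi1q1.
have [h hP] : exists h : {linear Z2 -> A^o}, forall v, f v = h (q2 v).
  apply: linear_factor_surj => // v /i1q2 [z <-].
  by have [u <-] := q1_surj z; exact: fi1q1.
have [g gP] := i2_ext h; by exists g => v; rewrite hP gP.
Qed.

End Splicing.

Section Transport.
Variables (A : pzRingType) (I : eqType) (F : I -> lmodType A).

(* The zero map unless [a = b], so that it can be written without a proof of [a = b]. *)
Definition lcast (a b : I) : {linear F a -> F b} :=
  match @eqP _ a b with
  | ReflectT e => eq_rect a (fun b => {linear F a -> F b}) idfun b e
  | ReflectF _ => \0
  end.

Lemma lcast_id a x : lcast a a x = x.
Proof. by rewrite /lcast; case: eqP => // e; rewrite (eq_irrelevance e erefl). Qed.

Lemma lcast_bij a b : a = b -> bijective (lcast a b).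
Proof. by move=> <-; exists id => x; rewrite lcast_id. Qed.

End Transport.

Section CyclicGluing.
Variables (A : pzRingType) (k : nat) (G Z : nat -> lmodType A).
Variables (i : forall j, {linear Z j -> G j}) (p : forall j, {linear G j -> Z j.+1}).
Variables (th : {linear Z k.+1 -> Z 0}) (M : lmodType A).
Hypotheses (th_bij : bijective th) (MZ0 : mod_iso M (Z 0)).
Hypotheses (S : forall j, (j <= k)%N -> syz_seq (i j) (p j))
  (i_ext : forall j, (j <= k)%N -> extends_along (i j) A^o).

Definition wrap j : {linear Z j.+1 -> Z (j.+1 %% k.+1)%N} :=
  if j.+1 == k.+1 then
    (lcast Z 0 (j.+1 %% k.+1)%N \o th \o lcast Z j.+1 k.+1 : {linear _ -> _})
  else lcast Z j.+1 (j.+1 %% k.+1)%N.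

Lemma wrap_bij j : (j <= k)%N -> bijective (wrap j).
Proof.
move=> jk; rewrite /wrap; case: eqP => [jE | jE].
  apply: bij_comp; last exact: lcast_bij.
  by apply: bij_comp => //; apply: lcast_bij; rewrite jE modnn.
apply: lcast_bij; rewrite modn_small // ltnS ltn_neqAle jk andbT.
by apply/eqP => jk'; apply: jE; rewrite jk'.
Qed.

Definition glued_d (t : 'I_k.+1) : {linear G t -> G (ordS t)} :=
  i (ordS t) \o (wrap t \o p t).

Lemma n_strongly_GP_glue : n_strongly_GP k.+1 M.
Proof.
have S' (t : 'I_k.+1) : syz_seq (i t) (wrap t \o p t).
  exact: syz_seq_postcomp (S (leq_ord t)) (wrap_bij (leq_ord t)).
have [phi phi_bij] := MZ0.
exists (fun t => G t), glued_d; split; first by move=> t; case: (S' t).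
split.
  move=> t; have [_ [_ [q1_surj _]]] := S' t; have [_ [_ [_ ex]]] := S' (ordS t).
  by apply: splice_exact q1_surj ex _; case: (S' (ordS (ordS t))) => _ [].
split.
  move=> t; have [_ [_ [q1_surj _]]] := S' t; have [_ [_ [q2_surj ex]]] := S' (ordS t).
  move=> f /(splice_hom_exact q1_surj ex q2_surj (i_ext (leq_ord (ordS (ordS t)))))[g].
  by exists g.
exists (i ord0 \o phi); have [_ [i0_inj [_ ex]]] := S' ord0.
split; first by move=> x y /i0_inj /(bij_inj phi_bij).
have phi_surj : surj phi by case: phi_bij => g _ gK z; exists (g z).
by apply: (splice_exact phi_surj ex); case: (S' (ordS ord0)) => _ [].
Qed.

End CyclicGluing.

Section ResolutionCycle.
Variables (A : pzRingType) (M : lmodType A) (R : proj_resolution M) (k : nat).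
Hypothesis res_ext : forall m, (m <= k)%N -> extends_along (res_syz_incl R m) A^o.
Variables (X : lmodType A) (j : {linear M -> X}) (q : {linear X -> res_syz R k}).
Hypotheses (Sj : syz_seq j q) (j_ext : extends_along j A^o).

(* The cycle [X, P_(k-1), ..., P_0] runs through the resolution backwards: [cycle_Z t]
   is the syzygy [N_(k+1-t)], except that [M] replaces [N_(k+1)]. *)
Definition cycle_G (t : nat) : lmodType A :=
  match t with 0 => X | t.+1 => pr_P R (k - t.+1)%N end.

Definition cycle_Z (t : nat) : lmodType A :=
  match t with 0 => M | t.+1 => res_syz R (k - t)%N end.

Definition cycle_incl t : {linear cycle_Z t -> cycle_G t} :=
  match t return {linear cycle_Z t -> cycle_G t} with
  | 0 => j
  | t.+1 => res_syz_incl R (k - t.+1)%N \o lcast (res_syz R) (k - t)%N (k - t.+1)%N.+1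
  end.

Definition cycle_proj t : {linear cycle_G t -> cycle_Z t.+1} :=
  match t return {linear cycle_G t -> cycle_Z t.+1} with
  | 0 => lcast (res_syz R) k (k - 0)%N \o q
  | t.+1 => res_syz_proj R (k - t.+1)%N
  end.

Lemma n_strongly_GP_res_cycle : n_strongly_GP k.+1 M.
Proof.
have subnSK t : (t < k)%N -> (k - t = (k - t.+1).+1)%N.
  by move=> tk; rewrite subnS prednK ?subn_gt0.
apply: (@n_strongly_GP_glue _ k cycle_G cycle_Z cycle_incl cycle_proj
  (lcast (res_syz R) (k - k)%N 0)).
- exact: (lcast_bij (res_syz R) (subnn k)).
- by exists idfun; exists id.
- case=> [|t] tk /=; first by apply: syz_seq_postcomp => //; apply: lcast_bij; rewrite subn0.
  by apply: syz_seq_precomp; [exact: res_syz_seq | exact/lcast_bij/subnSK].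
- case=> [|t] tk //=.
  by apply: extends_along_precomp; [exact/res_ext/leq_subr | exact/lcast_bij/subnSK].
Qed.

End ResolutionCycle.

Lemma n_strongly_GP_stably_periodic (A : pzRingType) (k : nat) (M : lmodType A) :
  (exists K, nsyzygy k.+1 M K /\ stably_iso K M) ->
  (forall i, (1 <= i <= k.+1)%N -> Ext_regular_vanishes M i) ->
  n_strongly_GP k.+1 M.
Proof.
move=> [K [MK KM]] M_Ext.
have [R _] : exists R : proj_resolution M, res_Ext_vanishes R 0 := M_Ext 1%N isT.
have res_ext m : (m <= k)%N -> extends_along (res_syz_incl R m) A^o.
  move=> mk; have [R' R'_Ext] : exists R', res_Ext_vanishes R' m := M_Ext m.+1 mk.
  have [f [g [gf _]]] := res_syz_stably_iso R R' m.
  exact: extends_along_transfer (res_syz_seq R m) (res_syz_seq R' m) gf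
    (res_Ext_extends R'_Ext).
have NM : stably_iso (res_syz R k.+1) M.
  exact: stably_iso_trans (stably_iso_sym (nsyzygy_stably_iso_res_syz R MK)) KM.
have [X [j [q Sj]]] := syz_seq_replace (res_syz_seq R k) NM
  (fun T => extends_along_fg_projective (res_ext k (leqnn k))).
apply: (n_strongly_GP_res_cycle res_ext Sj).
apply: (extends_along_transfer (a := idfun) (b := idfun) Sj (res_syz_seq R k))
  (res_ext k (leqnn k)).
exact: (eq_factors_through_proj (fun x => esym (subrr x)) (factors_through_proj0 _ _)).
Qed.

Section PeriodicComplex.
Variables (A : pzRingType) (k : nat) (M : lmodType A) (P : 'I_k.+1 -> lmodType A).
Variables (d : forall t : 'I_k.+1, {linear P t -> P (ordS t)}) (iota : {linear M -> P ord0}).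
Hypotheses (P_fgp : forall t, fg_projective (P t))
  (d_exact : forall t : 'I_k.+1, exact_at (d t) (d (ordS t)))
  (d_hom_exact : forall (t : 'I_k.+1) (f : {linear P (ordS t) -> A^o}),
    (forall x, f (d t x) = 0) ->
    exists g : {linear P (ordS (ordS t)) -> A^o}, forall y, f y = g (d (ordS t) y))
  (iota_inj : injective iota) (iota_exact : exact_at iota (d ord0)).

Lemma d_comp0 t x : d (ordS t) (d t x) = 0.
Proof. by apply/d_exact; exists x. Qed.

Lemma cycles_syz_seq t : syz_seq (ker_incl (d t)) (ker_corestr (@d_comp0 t)).
Proof.
split=> //; split; first exact: ker_incl_inj.
split.
  move=> z; have [u uz] := proj1 (d_exact (ker_incl _ z)) (ker_incl0 z).
  by exists u; apply: ker_incl_inj; rewrite ker_corestrE.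
move=> v; split=> [/(congr1 (ker_incl _)) | [u <-]].
  by rewrite ker_corestrE linear0 => /ker_inclP.
by apply: ker_incl_inj; rewrite ker_corestrE ker_incl0 linear0.
Qed.

Lemma iota_d0 m : d ord0 (iota m) = 0.
Proof. by apply/iota_exact; exists m. Qed.

Lemma cycles0_bij : bijective (ker_corestr iota_d0).
Proof.
apply: inj_surj_bijective.
  by move=> x y /(congr1 (ker_incl _)); rewrite !ker_corestrE => /iota_inj.
move=> z; have [m mz] := proj1 (iota_exact (ker_incl _ z)) (ker_incl0 z).
by exists m; apply: ker_incl_inj; rewrite ker_corestrE.
Qed.

Lemma val_ord_pred (t : 'I_k.+1) : (0 < t)%N -> val (ord_pred t) = t.-1.
Proof.
move=> t_gt0; rewrite /= -subn1 addnC -addnBA // modnDl modn_small subn1 //.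
exact: leq_ltn_trans (leq_pred _) (ltn_ord t).
Qed.

Fixpoint back_ord (j : nat) : 'I_k.+1 :=
  ord_pred (if j is j'.+1 then back_ord j' else ord0).

Lemma val_back_ord j : (j <= k)%N -> val (back_ord j) = (k - j)%N.
Proof.
elim: j => [|j IHj] jk; first by rewrite /= modn_small // subn0.
by rewrite val_ord_pred IHj ?(ltnW jk) ?subnS // subn_gt0.
Qed.

Lemma back_ord_last : back_ord k = ord0.
Proof. by apply: val_inj; rewrite val_back_ord // subnn. Qed.

Lemma syzygy_cycles t s : ordS t = s -> syzygy (kernel (d s)) (kernel (d t)).
Proof.
by move=> <-; exists (P t), (ker_incl (d t)), (ker_corestr (@d_comp0 t));
  exact: cycles_syz_seq.
Qed.

Lemma nsyzygy_cycles j : nsyzygy j.+1 M (kernel (d (back_ord j))).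
Proof.
elim: j => [|j IHj] /=.
  exists (kernel (d ord0)); split; last exact/syzygy_cycles/ord_predK.
  by exists (ker_corestr iota_d0); exact: cycles0_bij.
by exists (kernel (d (back_ord j))); split; last exact/syzygy_cycles/ord_predK.
Qed.

Lemma periodic_stably_syzygy : exists K, nsyzygy k.+1 M K /\ stably_iso K M.
Proof.
exists (kernel (d (back_ord k))); split; first exact: nsyzygy_cycles.
rewrite back_ord_last; apply/stably_iso_sym/mod_iso_stably_iso.
by exists (ker_corestr iota_d0); exact: cycles0_bij.
Qed.

Lemma cast_exact a b c : ordS a = b -> ordS b = c ->
  exact_at (lcast P (ordS a) b \o d a) (lcast P (ordS b) c \o d b).
Proof.
move=> <- <- v /=; rewrite lcast_id; split=> [/d_exact [u <-] | [u <-]].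
  by exists u; rewrite lcast_id.
by rewrite lcast_id d_comp0.
Qed.

Lemma cast_hom_exact a b c : ordS a = b -> ordS b = c ->
  forall f : {linear P b -> A^o},
  (forall x, f ((lcast P (ordS a) b \o d a) x) = 0) ->
  exists g : {linear P c -> A^o}, forall y, f y = g ((lcast P (ordS b) c \o d b) y).
Proof.
move=> <- <- f /= fd0; have [x | g gP] := d_hom_exact (t := a) (f := f).
  by have := fd0 x; rewrite lcast_id.
by exists g => y; rewrite lcast_id.
Qed.

Definition dpred t : {linear P (ord_pred t) -> P t} :=
  lcast P (ordS (ord_pred t)) t \o d (ord_pred t).

Lemma dpred_exact t : exact_at (dpred (ord_pred t)) (dpred t).
Proof. exact: cast_exact (ord_predK _) (ord_predK _). Qed.

Lemma d0_exact : exact_at (dpred ord0) (d ord0).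
Proof.
move=> v; have := cast_exact (ord_predK ord0) (erefl (ordS ord0)) v.
by rewrite /= lcast_id.
Qed.

Lemma periodic_Ext_vanishes : exists R : proj_resolution M, forall j, res_Ext_vanishes R j.
Proof.
have [eps epsP] : exists eps : {linear P (back_ord 0) -> M},
    forall x, iota (eps x) = dpred ord0 x.
  by apply: linear_factor_inj => // x; apply/iota_exact/d0_exact; exists x.
have eps_surj : surj eps.
  move=> m; have [u uP] := proj1 (d0_exact (iota m)) (iota_d0 m).
  by exists u; apply: iota_inj; rewrite epsP.
have eps_exact : exact_at (dpred (back_ord 0)) eps.
  move=> v; rewrite -(dpred_exact (t := ord0) v) -epsP -(linear0 iota).
  by split=> [-> // | /iota_inj].
exists (ProjRes (fun j => P_fgp (back_ord j)) eps_surj eps_exact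
  (fun j => dpred_exact (t := back_ord j))).
by move=> j f; apply: cast_hom_exact; apply: ord_predK.
Qed.

End PeriodicComplex.

Theorem proposition2p2p17 (R : comPzRingType) (A : algType R)
  (hA : artin_algebra A) (n : nat) (hn : (1 <= n)%N)
  (M : lmodType A) (hM : fin_gen M) :
  n_strongly_GP n M <->
  ((exists K : lmodType A, nsyzygy n M K /\ stably_iso K M) /\
   (forall i : nat, (1 <= i <= n)%N -> Ext_regular_vanishes M i)).
Proof.
case: n hn => // k _; split; last by move=> [MK M_Ext]; exact: n_strongly_GP_stably_periodic.
move=> [P [d [P_fgp [d_exact [d_hom_exact [iota [iota_inj iota_exact]]]]]]].
split; first exact: periodic_stably_syzygy P_fgp d_exact iota_inj iota_exact.
move=> [|i] // _.
have [Rs Rs_Ext] := periodic_Ext_vanishes P_fgp d_exact d_hom_exact iota_inj iota_exact.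
exact: (ex_intro _ Rs (Rs_Ext i)).
Qed.
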